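(* Let $G$ be a graph on $[n]$. Then $NC_G$ is a lattice if and only if $G$ is crossing closed. Moreover, if $G$ is crossing closed and $H,H'\in NC_G$, then $H\wedge H'=H\cap H'$ (the bond whose edge set is $E(H)\cap E(H')$), which is also the meet of $H$ and $H'$ in $L_G$; thus $NC_G$ is a meet-subsemilattice of $L_G$.
   Context: All graphs are finite simple graphs with vertex set $[n]=\{1,\dots,n\}$; edges are written $ij$ with $i<j$. Two edges $a_1a_2$ and $b_1b_2$ cross if $a_1<b_1<a_2<b_2$ or $b_1<a_1<b_2<a_2$. A spanning subgraph is identified with its edge set. A bond of $G$ is a spanning subgraph each of whose connected components is an induced subgraph of $G$. For a bond $H$, $\pi(H)$ is the set partition of $[n]$ whose blocks are the vertex sets of the connected components of $H$. A set partition is crossing if there are distinct blocks $B,B'$ and $a,c\in B$, $b,d\in B'$ with $a<b<c<d$, and noncrossing otherwise; a bond $H$ is noncrossing if $\pi(H)$ is. $L_G$ is the poset (bond lattice) of all bonds of $G$ ordered by inclusion of edge sets, and $NC_G$ is its subposet of noncrossing bonds. Two crossing edges $e,f$ are crossing closed if among all induced connected subgraphs of $G$ containing both $e$ and $f$ there is a unique one minimal with respect to containment; $G$ is crossing closed if every pair of crossing edges is crossing closed. *)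

(* Vertices [n] are represented by 'I_n (0-based; order preserved). *)
From mathcomp Require Import all_boot.
Set Implicit Arguments. Unset Strict Implicit. Unset Printing Implicit Defensive.

Section Defs.
Variable n : nat.
Notation V := 'I_n.
Notation edges := {set V * V}.

Definition is_graph (G : edges) : bool := [forall e in G, e.1 < e.2].

Definition adj (H : edges) : rel V := fun x y => ((x, y) \in H) || ((y, x) \in H).

Definition same_comp (H : edges) (x y : V) : bool := connect (adj H) x y.

(* H is a bond of G: H is a spanning subgraph of G and every connected
   component of H is an induced subgraph of G, i.e. every edge of G joining
   two vertices of the same component of H belongs to H. *)
Definition is_bond (G H : edges) : bool :=
  (H \subset G) && [forall e in G, same_comp H e.1 e.2 ==> (e \in H)].

(* pi(H) is crossing: distinct blocks B, B' with a,c in B, b,d in B', a<b<c<d *)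
Definition crossing_bond (H : edges) : bool :=
  [exists a : V, exists b : V, exists c : V, exists d : V,
     [&& a < b, b < c, c < d, same_comp H a c, same_comp H b d
       & ~~ same_comp H a b]].

Definition nc_bond (G H : edges) : bool := is_bond G H && ~~ crossing_bond H.

Definition crosses (e f : V * V) : bool :=
  [&& e.1 < f.1, f.1 < e.2 & e.2 < f.2] || [&& f.1 < e.1, e.1 < f.2 & f.2 < e.2].

Definition induced_connected (G : edges) (S : {set V}) : bool :=
  [forall x in S, forall y in S,
     connect (fun u v => [&& u \in S, v \in S & adj G u v]) x y].

(* induced connected subgraphs of G (identified with their vertex sets,
   containment of induced subgraphs = containment of vertex sets)
   containing both edges e and f *)
Definition ics_containing (G : edges) (e f : V * V) (S : {set V}) : bool :=
  [&& induced_connected G S, e.1 \in S, e.2 \in S, f.1 \in S & f.2 \in S].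

Definition minimal_in (P : pred {set V}) (S : {set V}) : Prop :=
  P S /\ forall T, P T -> T \subset S -> T = S.

Definition crossing_closed_pair (G : edges) (e f : V * V) : Prop :=
  exists S, minimal_in (ics_containing G e f) S /\
    forall S', minimal_in (ics_containing G e f) S' -> S' = S.

Definition crossing_closed (G : edges) : Prop :=
  forall e f, e \in G -> f \in G -> crosses e f -> crossing_closed_pair G e f.

Definition is_glb (P : pred edges) (H1 H2 M : edges) : Prop :=
  [/\ P M, M \subset H1, M \subset H2 &
      forall K, P K -> K \subset H1 -> K \subset H2 -> K \subset M].

Definition is_lub (P : pred edges) (H1 H2 J : edges) : Prop :=
  [/\ P J, H1 \subset J, H2 \subset J &
      forall K, P K -> H1 \subset K -> H2 \subset K -> J \subset K].

Definition is_lattice (P : pred edges) : Prop :=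
  forall H1 H2, P H1 -> P H2 ->
    (exists M, is_glb P H1 H2 M) /\ (exists J, is_lub P H1 H2 J).

End Defs.

From mathcomp Require Import all_boot.
Set Implicit Arguments. Unset Strict Implicit. Unset Printing Implicit Defensive.

(* Draw the vertices on a line and the edges as arcs above it.  The components
   of a set of edges form a crossing partition exactly when two edges from
   different components cross: if a < b < c < d with a ~ c and b ~ d, the walk
   from a to c leaves [0, b) through an edge (p, q) straddling b, the walk from
   b to d leaves [0, c) through an edge (x, y) straddling c, and either p lies
   outside (x, y) or x lies outside (p, q); in each case one walk leaves the
   other edge's interval through an edge crossing it.

   If G is crossing closed and S is the least induced connected set containing
   two crossing edges e and f, then every noncrossing bond containing e and f
   has them in one component, which is induced connected and hence contains S;
   as a bond, it then contains every edge of G inside S.  So noncrossing bonds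
   are closed under intersection and, G being the top element, NC_G is a
   lattice with intersection as meet.  Conversely, if NC_G is a lattice, the
   component of e in the join of {e} and {f} is contained in every induced
   connected T containing e and f, since the edges of G inside T form a
   noncrossing bond containing e and f; so it is the least such T. *)

Lemma connect_exit (T : finType) (r : rel T) (P : pred T) u v :
  connect r u v -> P u -> ~~ P v ->
  exists s1 s2, [/\ connect r u s1, r s1 s2, P s1 & ~~ P s2].
Proof.
move=> /connectP[p pth ->] {v}.
elim: p u pth => [|z p IH] u /=; first by move=> _ ->.
case/andP=> ruz pth Pu nPl.
case Pz: (P z); last by exists u, z; rewrite Pz connect0.
have [s1 [s2 [zs1 s12 Ps1 nPs2]]] := IH z pth Pz nPl.
by exists s1, s2; split=> //; apply: connect_trans (connect1 ruz) zs1.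
Qed.

Lemma connect_restrict (T : finType) (r r' : rel T) (S : {set T}) x y :
  (forall u v, u \in S -> r u v -> (v \in S) && r' u v) -> x \in S ->
  connect r x y -> connect (fun u v => [&& u \in S, v \in S & r' u v]) x y.
Proof.
move=> closedS Sx /connectP[p pth ->] {y}.
elim: p x Sx pth => [|z p IH] x Sx /=; first by rewrite connect0.
case/andP=> rxz pth; have /andP[Sz r'xz] := closedS _ _ Sx rxz.
by apply: connect_trans (IH z Sz pth); apply: connect1; rewrite Sx Sz r'xz.
Qed.

Section Bonds.

Variable n : nat.
Local Notation V := 'I_n.
Local Notation edges := {set V * V}.
Implicit Types (G H K : edges) (S T : {set V}) (e f g : V * V).
Implicit Types (a b c d m u v w x y z : V).

Definition component K x : {set V} := [set y | same_comp K x y].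

Definition induced_edges G T : edges := [set g in G | (g.1 \in T) && (g.2 \in T)].

Lemma same_compC K x y : same_comp K x y = same_comp K y x.
Proof. by apply: sym_connect_sym => u v; rewrite /adj orbC. Qed.

Lemma same_compxx K x : same_comp K x x.
Proof. exact: connect0. Qed.

Lemma same_comp_trans K x y z :
  same_comp K x y -> same_comp K y z -> same_comp K x z.
Proof. exact: connect_trans. Qed.

Lemma same_comp_edge K g : g \in K -> same_comp K g.1 g.2.
Proof. by move=> gK; apply: connect1; rewrite /adj -surjective_pairing gK. Qed.

Lemma adjS K K' x y : K \subset K' -> adj K x y -> adj K' x y.
Proof. by move=> KK' /orP[] /(subsetP KK') h; rewrite /adj h ?orbT. Qed.

Lemma same_compS K K' x y : K \subset K' -> same_comp K x y -> same_comp K' x y.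
Proof. by move=> KK'; apply: connect_sub => u v /(adjS KK') /connect1. Qed.

Lemma same_comp_neq K x y z :
  same_comp K x y -> ~~ same_comp K x z -> (y : nat) != z.
Proof. by move=> xy; apply: contraNneq => /val_inj <-. Qed.

Lemma graph_lt G g : is_graph G -> g \in G -> g.1 < g.2.
Proof. by move=> /forall_inP; apply. Qed.

Lemma is_graphS K G : K \subset G -> is_graph G -> is_graph K.
Proof.
by move=> KG gG; apply/forall_inP => g /(subsetP KG); apply: graph_lt.
Qed.

Lemma adj_graph K x y : is_graph K -> adj K x y ->
  ((x, y) \in K) && (x < y) || ((y, x) \in K) && (y < x).
Proof.
by move=> gK /orP[] xyK; rewrite xyK (graph_lt gK xyK) ?orbT.
Qed.

Lemma is_glb_setI (P : pred edges) H H' :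
  P (H :&: H') -> is_glb P H H' (H :&: H').
Proof.
by move=> PI; split; rewrite ?subsetIl ?subsetIr // => K _ HK H'K; rewrite subsetI HK.
Qed.

Lemma lattice_of_setI_closed (P : pred edges) top :
  P top -> (forall K, P K -> K \subset top) ->
  (forall H H', P H -> P H' -> P (H :&: H')) -> is_lattice P.
Proof.
move=> Ptop le_top PI H H' PH PH'.
split; first by exists (H :&: H'); apply/is_glb_setI/PI.
pose ub K := [&& P K, H \subset K & H' \subset K].
(* [top :&: _] keeps the empty intersection [setT] out of the induction. *)
exists (top :&: \bigcap_(K | ub K) K); split.
- apply: (big_rec (fun X => P (top :&: X))); first by rewrite setIT.
  by move=> K X /andP[PK _] PX; rewrite setICA; apply: PI.
- by rewrite subsetI le_top //; apply/bigcapsP => K /and3P[].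
- by rewrite subsetI le_top //; apply/bigcapsP => K /and3P[].
- move=> K PK HK H'K; apply: subset_trans (subsetIr _ _) (bigcap_inf _ _).
  by rewrite /ub PK HK H'K.
Qed.

Lemma unique_minimalP (P : pred {set V}) :
  (exists S, minimal_in P S /\ forall S', minimal_in P S' -> S' = S) <->
  exists2 S, P S & forall T, P T -> S \subset T.
Proof.
split=> [[S [[PS _] uniqS]] | [S PS leastS]].
  exists S => // T PT; have [A /minsetP minA AT] := minset_exists PT.
  by rewrite -(uniqS A minA).
exists S; split.
  by split=> // T PT TS; apply/eqP; rewrite eqEsubset TS leastS.
by move=> S' [PS' minS']; rewrite (minS' S PS (leastS _ PS')).
Qed.

Lemma exists_straddling_edge K x y m : is_graph K -> x < m -> m <= y ->
  same_comp K x y -> ~~ same_comp K x m ->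
  exists2 g, g \in K & [&& g.1 < m, m < g.2 & same_comp K x g.1].
Proof.
move=> gK xm my xy nxm.
have nym : ~~ (y < m) by rewrite -leqNgt.
have [s1 [s2 [xs1c s12 s1m]]] := connect_exit (P := fun w : V => w < m) xy xm nym.
have xs1 : same_comp K x s1 := xs1c.
rewrite /= -leqNgt in s1m * => ms2.
have m_s2 : m < s2.
  by rewrite ltn_neqAle ms2 andbT eq_sym (same_comp_neq _ nxm) //;
     apply: same_comp_trans xs1 (connect1 s12).
case/orP: (adj_graph gK s12) => /andP[s12K s12lt].
  by exists (s1, s2); rewrite //= s1m m_s2 xs1.
by have := ltn_trans s12lt (ltn_trans s1m m_s2); rewrite ltnn.
Qed.

Lemma exists_crossing_edge K x y u v : is_graph K -> x < u -> u < y ->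
  ~~ ((x < v) && (v < y)) -> same_comp K u v ->
  ~~ same_comp K u x -> ~~ same_comp K u y ->
  exists2 e, e \in K & crosses e (x, y) && same_comp K u e.1.
Proof.
move=> gK xu uy nv uv nux nuy.
have [s1 [s2 [us1c s12 /andP[xs1 s1y] ns2]]] :=
  connect_exit (P := fun w : V => (x < w) && (w < y)) uv (introT andP (conj xu uy)) nv.
have us1 : same_comp K u s1 := us1c.
have us2 : same_comp K u s2 := same_comp_trans us1 (connect1 s12).
case/orP: (adj_graph gK s12) => /andP[eK lt].
- have y_s2 : y < s2.
    rewrite ltn_neqAle eq_sym (same_comp_neq us2 nuy) /=.
    by move: ns2; rewrite (ltn_trans xs1 lt) /= -leqNgt.
  by exists (s1, s2); rewrite // /crosses /= xs1 s1y y_s2 us1 orbT.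
- have s2_x : s2 < x.
    rewrite ltn_neqAle (same_comp_neq us2 nux) /=.
    by move: ns2; rewrite (ltn_trans lt s1y) andbT -leqNgt.
  by exists (s2, s1); rewrite // /crosses /= s2_x xs1 s1y us2.
Qed.

Lemma crossing_comps_crossing_edges K a b c d : is_graph K ->
  a < b -> b < c -> c < d ->
  same_comp K a c -> same_comp K b d -> ~~ same_comp K a b ->
  exists e f, [/\ e \in K, f \in K, crosses e f,
                  same_comp K a e.1 & same_comp K b f.1].
Proof.
move=> gK ab bc cd ac bd nab.
have apart z w : same_comp K a z -> same_comp K b w -> ~~ same_comp K z w.
  move=> az bw; apply: contra nab => zw.
  by apply: same_comp_trans az (same_comp_trans zw _); rewrite same_compC.
have ca : same_comp K c a by rewrite same_compC.
have [[p q] pqK /and3P[/= pb bq ap]] :=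
  exists_straddling_edge gK ab (ltnW bc) ac nab.
have aq : same_comp K a q := same_comp_trans ap (same_comp_edge pqK).
have nbc : ~~ same_comp K b c by rewrite same_compC; apply: apart ac (same_compxx K b).
have [[x y] xyK /and3P[/= xc cy bx]] :=
  exists_straddling_edge gK bc (ltnW cd) bd nbc.
have by_ : same_comp K b y := same_comp_trans bx (same_comp_edge xyK).
have [xpy | nxpy] := boolP ((x < p) && (p < y)); last first.
  have [e eK /andP[cre ce]] := exists_crossing_edge gK xc cy nxpy
    (same_comp_trans ca ap) (apart _ _ ac bx) (apart _ _ ac by_).
  by exists e, (x, y); split=> //; apply: same_comp_trans ac ce.
have [pxq | npxq] := boolP ((p < x) && (x < q)).
  by have := ltn_trans (proj1 (andP xpy)) (proj1 (andP pxq)); rewrite ltnn.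
have nb w : same_comp K a w -> ~~ same_comp K b w.
  by move=> aw; rewrite same_compC; apply: apart aw (same_compxx K b).
have [f fK /andP[crf bf]] := exists_crossing_edge gK pb bq npxq bx (nb _ ap) (nb _ aq).
by exists (p, q), f; split=> //; rewrite /crosses orbC.
Qed.

Lemma crosses_same_comp H e f : ~~ crossing_bond H ->
  e \in H -> f \in H -> crosses e f -> same_comp H e.1 f.1.
Proof.
move=> ncH eH fH.
have nc a b c d : a < b -> b < c -> c < d ->
    same_comp H a c -> same_comp H b d -> same_comp H a b.
  move=> ab bc cd ac bd; apply: contraNT ncH => nab.
  apply/existsP; exists a; apply/existsP; exists b; apply/existsP; exists c.
  by apply/existsP; exists d; rewrite ab bc cd ac bd.
case/orP=> /and3P[h1 h2 h3].
  exact: nc h1 h2 h3 (same_comp_edge eH) (same_comp_edge fH).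
by rewrite same_compC; apply: nc h1 h2 h3 (same_comp_edge fH) (same_comp_edge eH).
Qed.

Lemma noncrossing_of_crosses K : is_graph K ->
  (forall e f, e \in K -> f \in K -> crosses e f -> same_comp K e.1 f.1) ->
  ~~ crossing_bond K.
Proof.
move=> gK Kcross; apply/negP => /existsP[a /existsP[b /existsP[c /existsP[d]]]].
case/and5P=> ab bc cd ac /andP[bd nab].
have [e [f [eK fK cef ae bf]]] := crossing_comps_crossing_edges gK ab bc cd ac bd nab.
move/negP: nab; apply; apply: same_comp_trans ae _.
by apply: same_comp_trans (Kcross e f eK fK cef) _; rewrite same_compC.
Qed.

Lemma induced_connected_component G K x :
  K \subset G -> induced_connected G (component K x).
Proof.
move=> KG; apply/forall_inP => y Cy; apply/forall_inP => z Cz.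
have yz : same_comp K y z.
  by rewrite !inE in Cy Cz; rewrite same_compC in Cy; apply: same_comp_trans Cy Cz.
apply: connect_restrict Cy yz => u v Cu uv; rewrite inE in Cu.
by rewrite inE (same_comp_trans Cu (connect1 uv)) (adjS KG uv).
Qed.

Lemma induced_connected_same_comp G T x y : induced_connected G T ->
  x \in T -> y \in T -> same_comp (induced_edges G T) x y.
Proof.
move=> /forallP/(_ x)/implyP icT Tx /(implyP (forallP (icT Tx) y)).
apply: connect_sub => u v /and3P[Tu Tv /orP[uv | vu]]; apply: connect1;
  by rewrite /adj !inE /= ?uv ?vu Tu Tv ?orbT.
Qed.

Lemma same_comp_induced G T x y : same_comp (induced_edges G T) x y ->
  x = y \/ (x \in T /\ y \in T).
Proof.
have adjT u v : adj (induced_edges G T) u v -> (u \in T) && (v \in T).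
  by case/orP; rewrite inE => /andP[_ /andP[/= h1 h2]]; rewrite h1 h2.
move=> /connectP[p pth ->]; case: p pth => [|z p] /=; first by left.
case/andP=> /adjT/andP[Tx Tz] pth; right; split=> //.
by elim: p z Tz pth => [|w p IH] z Tz //= /andP[/adjT/andP[_ Tw] pth]; apply: IH pth.
Qed.

Lemma induced_edgesS G S T : S \subset T -> induced_edges G S \subset induced_edges G T.
Proof.
move=> ST; apply/subsetP => g; rewrite !inE => /andP[-> /andP[S1 S2]].
by rewrite !(subsetP ST).
Qed.

Lemma induced_connected_edge G g : g \in G -> induced_connected G [set g.1; g.2].
Proof.
move=> gG; apply/forall_inP => x gx; apply/forall_inP => y gy.
have g12 : adj G g.1 g.2 by rewrite /adj -surjective_pairing gG.
have g21 : adj G g.2 g.1 by rewrite /adj -surjective_pairing gG orbT.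
by case/set2P: gx => ->; case/set2P: gy => ->; rewrite ?connect0 //;
  apply: connect1; rewrite !inE !eqxx ?orbT.
Qed.

Lemma bond_edge G H g : is_bond G H -> g \in G -> same_comp H g.1 g.2 -> g \in H.
Proof. by case/andP=> _ /forallP/(_ g)/implyP bH /bH/implyP. Qed.

Lemma bondI G H H' : is_bond G H -> is_bond G H' -> is_bond G (H :&: H').
Proof.
move=> bH bH'; apply/andP; split.
  by apply: subset_trans (subsetIl _ _) _; case/andP: bH.
apply/forall_inP => g gG; apply/implyP => sc.
by rewrite inE !(bond_edge _ gG) // (same_compS _ sc) ?subsetIl ?subsetIr.
Qed.

Lemma induced_component_subset G H x :
  is_bond G H -> induced_edges G (component H x) \subset H.
Proof.
move=> bH; apply/subsetP => g; rewrite !inE => /andP[gG /andP[xg1 xg2]].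
by apply: bond_edge bH gG _; rewrite same_compC in xg1; apply: same_comp_trans xg1 xg2.
Qed.

Lemma nc_bond_induced G T : is_graph G -> induced_connected G T ->
  nc_bond G (induced_edges G T).
Proof.
move=> gG icT; have sub : induced_edges G T \subset G.
  by apply/subsetP => g; rewrite inE => /andP[].
apply/andP; split; first (apply/andP; split=> //).
  apply/forall_inP => g gG'; apply/implyP.
  case/same_comp_induced => [g12 | [Tg1 Tg2]]; last by rewrite inE gG' Tg1 Tg2.
  by have := graph_lt gG gG'; rewrite g12 ltnn.
apply: noncrossing_of_crosses; first exact: is_graphS gG.
move=> e f; rewrite !inE => /andP[_ /andP[Te1 _]] /andP[_ /andP[Tf1 _]] _.
exact: induced_connected_same_comp.
Qed.

Lemma nc_bond_edge G g : is_graph G -> g \in G -> nc_bond G [set g].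
Proof.
move=> gG gG'; have g12 := graph_lt gG gG'.
suff -> : [set g] = induced_edges G [set g.1; g.2].
  exact: nc_bond_induced gG (induced_connected_edge gG').
apply/setP => h; rewrite !inE; apply/eqP/andP => [-> | [hG]].
  by rewrite gG' !eqxx orbT.
have := graph_lt gG hG; case: h {hG} => h1 h2 /=.
move=> h12 /andP[/orP[]/eqP eq1 /orP[]/eqP eq2]; subst h1 h2; rewrite ?ltnn // in h12.
- by rewrite -surjective_pairing.
- by have := ltn_trans g12 h12; rewrite ltnn.
Qed.

Lemma ics_component G H e f : H \subset G -> e \in H -> f \in H ->
  same_comp H e.1 f.1 -> ics_containing G e f (component H e.1).
Proof.
move=> HG eH fH ef.
rewrite /ics_containing induced_connected_component // !inE same_compxx ef.
by rewrite (same_comp_edge eH) (same_comp_trans ef (same_comp_edge fH)).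
Qed.

Lemma nc_bond_graph G : is_graph G -> crossing_closed G -> nc_bond G G.
Proof.
move=> gG ccG; rewrite /nc_bond /is_bond subxx /=.
apply/andP; split; first by apply/forall_inP => g ->; rewrite implybT.
apply: noncrossing_of_crosses => // e f eG fG cef.
have [S /and5P[icS e1S _ f1S _] _] := (unique_minimalP _).1 (ccG e f eG fG cef).
apply: same_compS (induced_connected_same_comp icS e1S f1S).
by apply/subsetP => g; rewrite inE => /andP[].
Qed.

Lemma nc_bondI G H H' : is_graph G -> crossing_closed G ->
  nc_bond G H -> nc_bond G H' -> nc_bond G (H :&: H').
Proof.
move=> gG ccG ncH ncH'; have bHH' := bondI (andP ncH).1 (andP ncH').1.
rewrite /nc_bond bHH' /=; set K := H :&: H'.
have KG : K \subset G by case/andP: bHH'.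
apply: noncrossing_of_crosses => [|e f eK fK cef]; first exact: is_graphS gG.
have [S icsS leastS] :=
  (unique_minimalP _).1 (ccG e f (subsetP KG _ eK) (subsetP KG _ fK) cef).
have induced_sub H0 : nc_bond G H0 -> K \subset H0 -> induced_edges G S \subset H0.
  move=> /andP[bH0 ncH0] KH0; have [eH0 fH0] := (subsetP KH0 _ eK, subsetP KH0 _ fK).
  apply: subset_trans (induced_component_subset e.1 bH0); apply/induced_edgesS/leastS.
  apply: ics_component eH0 fH0 (crosses_same_comp ncH0 eH0 fH0 cef).
  by case/andP: bH0.
case/and5P: icsS => icS e1S _ f1S _.
apply: same_compS (induced_connected_same_comp icS e1S f1S).
by rewrite subsetI induced_sub ?subsetIl // induced_sub ?subsetIr.
Qed.

Lemma crossing_closed_of_lattice G : is_graph G -> is_lattice (nc_bond G) ->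
  crossing_closed G.
Proof.
move=> gG latG e f eG fG cef; apply/unique_minimalP.
have [_ [J [/andP[bJ ncJ] eJ fJ leJ]]] :=
  latG _ _ (nc_bond_edge gG eG) (nc_bond_edge gG fG).
rewrite !sub1set in eJ fJ; have JG : J \subset G by case/andP: bJ.
exists (component J e.1).
  exact: ics_component JG eJ fJ (crosses_same_comp ncJ eJ fJ cef).
move=> T /and5P[icT Te1 Te2 Tf1 Tf2].
have JT : J \subset induced_edges G T.
  by apply: leJ; rewrite ?nc_bond_induced // sub1set inE ?eG ?fG ?Te1 ?Te2 ?Tf1 ?Tf2.
apply/subsetP => x; rewrite inE => /(same_compS JT)/same_comp_induced[<- | []] //.
Qed.

End Bonds.

Theorem theorem2p6 (n : nat) (G : {set 'I_n * 'I_n}) :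
  is_graph G ->
  (is_lattice (nc_bond G) <-> crossing_closed G) /\
  (crossing_closed G ->
   forall H H' : {set 'I_n * 'I_n}, nc_bond G H -> nc_bond G H' ->
     is_glb (nc_bond G) H H' (H :&: H') /\ is_glb (is_bond G) H H' (H :&: H')).
Proof.
move=> gG; split; last first.
  move=> ccG H H' ncH ncH'; split; apply: is_glb_setI; first exact: nc_bondI.
  exact: bondI (andP ncH).1 (andP ncH').1.
split; first exact: crossing_closed_of_lattice.
move=> ccG; apply: (lattice_of_setI_closed (nc_bond_graph gG ccG)).
- by move=> K /andP[/andP[]].
- by move=> H H'; apply: nc_bondI.
Qed.
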